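(* Let $m\ge1$ be an integer and $\mathcal{U}=\{S_0,S_{2,1^0},\ldots,S_{2,1^{m-1}}\}$. Define vectors $(y_0,\ldots,y_m)\in\mathbb{R}^{m+1}$: $\mathbf{d}_{1,m}=(1,0,\ldots,0)$; $\mathbf{d}_{2,m}=(1,1,\ldots,1)$; $\mathbf{d}_{3,m}$ with $y_0=1,y_1=2$ and $y_k=k$ for $k\ge2$; $\mathbf{d}_{4,m}$ with $y_0=1$ and $y_k=k+2$ for $k\ge1$; $\mathbf{d}_{5,m}$ with $y_0=2,y_1=4$ and $y_k=2k+1$ for $k\ge2$. Then $\mathbf{d}_{j,m}\in\operatorname{trop}(\mathcal{N}_{\mathcal{U}})$ for each $1\le j\le5$.
   Context: All graphs are finite; $\hom(H;G)$ is the number of graph homomorphisms from $H$ to $G$. $S_0$ is a single vertex; for $k\ge0$, $S_{2,1^k}$ is the tree with vertex set $\{1,\ldots,k+3\}$ and edge set $\{\{1,j\}:2\le j\le k+2\}\cup\{\{k+2,k+3\}\}$. $\mathcal{N}_{\mathcal{U}}$ is the set of vectors $(\hom(S_0;G),\hom(S_{2,1^0};G),\ldots,\hom(S_{2,1^{m-1}};G))$ over all graphs $G$; $\operatorname{trop}(\mathcal{N}_{\mathcal{U}})=\lim_{\tau\to\infty}\log_\tau(\mathcal{N}_{\mathcal{U}}\cap\mathbb{R}^{m+1}_{>0})$ (coordinatewise logarithm), which equals the closure of the conical hull of the coordinatewise logarithms of the points of $\mathcal{N}_{\mathcal{U}}$ with all coordinates positive. *)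

From mathcomp Require Import all_boot.
From Stdlib Require Import Reals.

Set Implicit Arguments.
Unset Strict Implicit.
Unset Printing Implicit Defensive.

Definition simple_graph (V : finType) (e : rel V) : Prop :=
  (forall x y, e x y = e y x) /\ (forall x, e x x = false).

Definition hom (VH VG : finType) (eH : rel VH) (eG : rel VG) : nat :=
  #|[set f : {ffun VH -> VG} |
      [forall x, forall y, eH x y ==> eG (f x) (f y)]]|.

Definition S0_edge : rel 'I_1 := fun _ _ => false.

(* S_{2,1^k} on vertices {0,...,k+2} (0-indexed version of {1,...,k+3}):
   edges {0,j} for 1 <= j <= k+1, and {k+1,k+2}. *)
Definition S21_edge (k : nat) : rel 'I_(k + 3) := fun x y =>
  let a := nat_of_ord x in let b := nat_of_ord y in
  [|| (a == 0) && (1 <= b <= k + 1),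
      (b == 0) && (1 <= a <= k + 1),
      (a == k + 1) && (b == k + 2)
    | (b == k + 1) && (a == k + 2)].

Definition homvec (n : nat) (eG : rel 'I_n) (i : nat) : nat :=
  match i with
  | 0 => hom S0_edge eG
  | k.+1 => hom (@S21_edge k) eG
  end.

(* Vectors of R^{m+1} are represented as functions nat -> R, only the
   coordinates 0..m being relevant. *)

(* x is the coordinatewise log of a point of N_U with all coordinates
   positive (G ranges over finite simple graphs, w.l.o.g. on 'I_n). *)
Definition log_point (m : nat) (x : nat -> R) : Prop :=
  exists (n : nat) (eG : rel 'I_n), simple_graph eG /\
    forall i, i <= m -> (0 < homvec eG i)%N /\ x i = ln (INR (homvec eG i)).

Definition lincomb (l : list (R * (nat -> R))) (i : nat) : R :=
  List.fold_right (fun cp acc => (fst cp * snd cp i + acc)%R) 0%R l.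

Definition in_cone (m : nat) (y : nat -> R) : Prop :=
  exists l : list (R * (nat -> R)),
    (forall cp, List.In cp l -> (0 <= fst cp)%R /\ log_point m (snd cp)) /\
    forall i, i <= m -> y i = lincomb l i.

(* trop(N_U): Euclidean closure (in R^{m+1}) of the conical hull. *)
Definition trop_NU (m : nat) (d : nat -> R) : Prop :=
  forall eps : R, (0 < eps)%R -> exists y, in_cone m y /\
    forall i, i <= m -> (Rabs (y i - d i) < eps)%R.

Definition dvec (j : nat) (i : nat) : R :=
  match j with
  | 1 => if i == 0 then 1%R else 0%R
  | 2 => 1%R
  | 3 => if i == 0 then 1%R else if i == 1 then 2%R else INR i
  | 4 => if i == 0 then 1%R else (INR i + 2)%R
  | 5 => if i == 0 then 2%R else if i == 1 then 4%R else (2 * INR i + 1)%R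
  | _ => 0%R
  end.

From mathcomp Require Import all_boot zify.
From Stdlib Require Import Reals Lra.
(* Reals rebinds [_ ^ _] on [nat] to [Nat.pow]; restore [expn]. *)
Import ssrnat.

(* hom(S_{2,1^k}; G) = sum over oriented edges vw of G of deg(w) deg(v)^k: the centre goes to v,
   its distinguished neighbour to w, the pendant vertex to a neighbour of w and the k remaining
   leaves to neighbours of v.  Hence if a family G_N of graphs has hom(F; G_N) within a constant
   factor of N^(a_F) for every F in U, the rescaled log-vectors (log hom(F; G_N)) / log N lie in
   the cone and converge to a, so a is in trop(N_U).  The witnesses are: an edge plus N isolated
   vertices (d_1), a perfect matching on 2N vertices (d_2), the star K_{1,N} (d_3), the clique
   K_{N+1} (d_4), and the cone over N disjoint copies of K_N (d_5). *)

Definition deg {V : finType} (e : rel V) (v : V) : nat := #|[pred u | e v u]|.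

Definition hom_profile {V : finType} (e : rel V) (i : nat) : nat :=
  match i with
  | 0 => hom S0_edge e
  | k.+1 => hom (@S21_edge k) e
  end.

Lemma deg_sum (V : finType) (e : rel V) (v : V) : deg e v = \sum_u (e v u : nat).
Proof.
rewrite /deg -sum1_card big_mkcond; apply: eq_bigr => u _.
by rewrite inE; case: (e v u).
Qed.

Lemma sum_option (T : finType) (F : option T -> nat) :
  \sum_x F x = F None + \sum_x F (Some x).
Proof.
rewrite (bigD1 None) //=; congr (_ + _).
by rewrite (reindex_omap Some (fun x => x)) //=; [apply: eq_bigl => x; rewrite eqxx | case].
Qed.

Lemma hom_S0 (V : finType) (e : rel V) : hom S0_edge e = #|V|.
Proof.
rewrite /hom (eq_card (B := predT)); first by rewrite card_ffun card_ord expn1.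
by move=> f; rewrite !inE; apply/forallP => x; apply/forallP.
Qed.

Lemma hom_relabel (VH V1 V2 : finType) (eH : rel VH) (e1 : rel V1) (e2 : rel V2)
    (g : V1 -> V2) : bijective g -> {mono g : x y / e1 x y >-> e2 x y} ->
  hom eH e1 = hom eH e2.
Proof.
case=> g' gK g'K ge; rewrite /hom.
pose post (f : {ffun VH -> V1}) := [ffun x => g (f x)].
have post_inj : injective post.
  by move=> f1 f2 /ffunP eqf; apply/ffunP => x; have := eqf x; rewrite !ffunE => /(can_inj gK).
rewrite -(card_imset _ post_inj); apply: eq_card => f2; apply/imsetP/idP.
  case=> f1; rewrite !inE => /'forall_forallP hf1 ->.
  by apply/'forall_forallP => x y; rewrite !ffunE ge.
rewrite inE => /'forall_forallP hf2; exists [ffun x => g' (f2 x)].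
  by rewrite inE; apply/'forall_forallP => x y; rewrite !ffunE -ge !g'K.
by apply/ffunP => x; rewrite !ffunE g'K.
Qed.

Section S21Homomorphisms.

Variables (V : finType) (e : rel V) (k : nat).
Hypothesis e_sym : forall x y, e x y = e y x.

(* Where a homomorphism sending vertex 0 to [v] and vertex [k + 1] to [w] may send vertex [x];
   the fibre of [k + 1] is empty unless [vw] is an edge. *)
Definition S21_fibre (v w : V) (x : nat) : pred V :=
  if x == 0 then pred1 v
  else if x == k + 1 then [pred y | (y == w) && e v w]
  else if x == k + 2 then [pred y | e w y]
  else [pred y | e v y].

Lemma S21_hom_family (o0 o1 : 'I_(k + 3)) (v w : V) (f : {ffun 'I_(k + 3) -> V}) :
    o0 = 0 :> nat -> o1 = k + 1 :> nat ->
  [&& [forall x, forall y, S21_edge x y ==> e (f x) (f y)], f o0 == v & f o1 == w]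
  = (f \in finfun.family (fun x : 'I_(k + 3) => S21_fibre v w x)).
Proof.
move=> ho0 ho1; have o0E (x : 'I_(k + 3)) : x = 0 :> nat -> x = o0.
  by move=> x0; apply: ord_inj; rewrite x0.
have o1E (x : 'I_(k + 3)) : x = k + 1 :> nat -> x = o1.
  by move=> x1; apply: ord_inj; rewrite x1.
apply/idP/familyP.
  case/and3P=> /'forall_forallP hom_f /eqP fv /eqP fw x.
  have edge y z : S21_edge y z -> e (f y) (f z) by exact/implyP.
  rewrite /S21_fibre; case: eqP => [/o0E-> | x0]; first by rewrite inE fv.
  case: eqP => [/o1E-> | x1].
    by rewrite inE /= fw eqxx -fv -fw edge // /S21_edge ho0 ho1; lia.
  case: eqP => [x2 | x2]; rewrite inE /=.
    by rewrite -fw edge // /S21_edge ho1 x2; lia.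
  by rewrite -fv edge // /S21_edge ho0; have := ltn_ord x; lia.
move=> fibre.
have fv : f o0 = v by have := fibre o0; rewrite /S21_fibre ho0 inE => /eqP.
have [fw evw] : f o1 = w /\ e v w.
  have := fibre o1; rewrite /S21_fibre ho1 eqxx ifN_eq; last by apply/eqP; lia.
  by case/andP=> /eqP.
have spoke (x : 'I_(k + 3)) : 1 <= x <= k + 1 -> e v (f x).
  move=> x_range; case: (x =P k + 1 :> nat) => [/o1E-> | x1]; first by rewrite fw.
  by have := fibre x; rewrite /S21_fibre !ifN_eq //; apply/eqP; lia.
have tail (x : 'I_(k + 3)) : x = k + 2 :> nat -> e w (f x).
  by move=> x2; have := fibre x; rewrite /S21_fibre x2 eqxx !ifN_eq //; apply/eqP; lia.
rewrite fv fw !eqxx !andbT; apply/'forall_forallP => x y; apply/implyP.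
case/or4P=> /andP[/eqP a b].
- by rewrite (o0E x a) fv spoke.
- by rewrite (o0E y a) fv e_sym spoke.
- by rewrite (o1E x a) fw tail //; apply/eqP.
- by rewrite (o1E y a) fw e_sym tail //; apply/eqP.
Qed.

Lemma card_S21_family (v w : V) :
  #|finfun.family (fun x : 'I_(k + 3) => S21_fibre v w x)| = e v w * deg e w * deg e v ^ k.
Proof.
rewrite card_family foldrE big_image -(big_mkord xpredT (fun i => #|S21_fibre v w i|)).
rewrite (_ : k + 3 = (k + 1).+2); last lia.
rewrite big_nat_recr // big_nat_recr // big_ltn /=; last lia.
rewrite (@eq_big_nat _ _ _ 1 (k + 1) _ (fun=> deg e v)); last first.
  by move=> i i_range; rewrite /S21_fibre !ifN_eq //; apply/eqP; lia.
rewrite prod_nat_const_nat addnK /S21_fibre card1 addn1 addn2 !eqxx /=.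
rewrite (gtn_eqF (ltnSn k.+1)).
have -> : #|[pred y | y == w & e v w]| = e v w.
  case: (e v w); first by apply: eq_card1 => y; rewrite !inE ?andbT.
  by apply: eq_card0 => y; rewrite !inE ?andbF.
rewrite -/(deg e w); lia.
Qed.

Lemma hom_S21 : hom (@S21_edge k) e = \sum_v \sum_w e v w * deg e w * deg e v ^ k.
Proof.
have lt0 : 0 < k + 3 by lia.
have lt1 : k + 1 < k + 3 by lia.
rewrite /hom cardsE -sum1_card.
rewrite (partition_big (fun f : {ffun _} => f (Ordinal lt0)) xpredT) //=.
apply: eq_bigr => v _.
rewrite (partition_big (fun f : {ffun _} => f (Ordinal lt1)) xpredT) //=.
apply: eq_bigr => w _.
rewrite sum1dep_card -card_S21_family; apply: eq_card => f.
by rewrite inE -andbA; apply: S21_hom_family.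
Qed.

End S21Homomorphisms.

Lemma hom_S21_regular (V : finType) (e : rel V) (d k : nat) :
    (forall x y, e x y = e y x) -> (forall v, deg e v = d) ->
  hom (@S21_edge k) e = #|V| * d ^ k.+2.
Proof.
move=> e_sym e_reg; rewrite hom_S21 // -sum_nat_const; apply: eq_bigr => v _.
rewrite (eq_bigr (fun w => e v w * (d * d ^ k))); last by move=> w _; rewrite !e_reg mulnA.
by rewrite -big_distrl /= -deg_sum e_reg !expnS.
Qed.

Definition cone {T : finType} (e : rel T) : rel (option T) := fun x y =>
  match x, y with
  | Some a, Some b => e a b
  | None, None => false
  | _, _ => true
  end.

Section Cone.

Variables (T : finType) (e : rel T).

Lemma cone_simple : simple_graph e -> simple_graph (cone e).
Proof.
case=> e_sym e_irr; split; first by case=> [a|] [b|] /=.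
by case=> [a|] /=.
Qed.

Lemma deg_cone_None : deg (cone e) None = #|T|.
Proof. by rewrite deg_sum sum_option sum_nat_const muln1. Qed.

Lemma deg_cone_Some v : deg (cone e) (Some v) = (deg e v).+1.
Proof. by rewrite !deg_sum sum_option. Qed.

Lemma hom_S21_cone (d k : nat) :
    (forall x y, e x y = e y x) -> (forall v, deg e v = d) ->
  hom (@S21_edge k) (cone e) =
    #|T| * (d.+1 * #|T| ^ k) + #|T| * (#|T| * d.+1 ^ k) + #|T| * d * d.+1 ^ k.+1.
Proof.
move=> e_sym e_reg; have cone_sym : forall x y, cone e x y = cone e y x.
  by case=> [a|] [b|] //=.
rewrite hom_S21 // sum_option sum_option /= deg_cone_None.
rewrite mul0n add0n (eq_bigr (fun _ => d.+1 * #|T| ^ k)); last first.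
  by move=> w _; rewrite deg_cone_Some e_reg mul1n.
rewrite sum_nat_const -addnA; congr (_ + _).
transitivity (\sum_(v : T) (#|T| * d.+1 ^ k + d * d.+1 ^ k.+1)); last first.
  by rewrite sum_nat_const (eq_card (B := T)) //; nia.
apply: eq_bigr => v _; rewrite sum_option /= deg_cone_None deg_cone_Some e_reg mul1n.
congr (_ + _); rewrite (eq_bigr (fun w => e v w * d.+1 ^ k.+1)); last first.
  by move=> w _; rewrite deg_cone_Some e_reg -mulnA -expnS.
by rewrite -big_distrl /= -deg_sum e_reg.
Qed.

End Cone.

Definition complete_graph (T : finType) : rel T := fun x y => x != y.

Lemma complete_graph_simple (T : finType) : simple_graph (complete_graph T).
Proof. by split=> [x y|x]; rewrite /complete_graph ?eqxx // eq_sym. Qed.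

Lemma deg_complete_graph (T : finType) (v : T) : deg (complete_graph T) v = #|T|.-1.
Proof.
rewrite /deg (eq_card (B := predC1 v)) ?cardC1 // => u.
by rewrite !inE /complete_graph eq_sym.
Qed.

Definition clique_union (I T : finType) : rel (I * T) := fun p q =>
  (p.1 == q.1) && complete_graph T p.2 q.2.

Lemma clique_union_simple (I T : finType) : simple_graph (clique_union I T).
Proof.
have [T_sym T_irr] := complete_graph_simple T.
by split=> [p q|p]; rewrite /clique_union ?T_irr ?andbF // eq_sym T_sym.
Qed.

Lemma deg_clique_union (I T : finType) (p : I * T) : deg (clique_union I T) p = #|T|.-1.
Proof.
rewrite /deg (eq_card (B := setX [set p.1] [set~ p.2])).
  by rewrite cardsX cards1 cardsC1 mul1n.
by case=> a b; rewrite !inE /clique_union /complete_graph /= eq_sym (eq_sym b).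
Qed.

Definition edge_plus_isolated (T : finType) : rel (option (option T)) := fun x y =>
  match x, y with
  | None, Some None | Some None, None => true
  | _, _ => false
  end.

Lemma edge_plus_isolated_simple (T : finType) : simple_graph (edge_plus_isolated T).
Proof. by split=> [[[a|]|] [[b|]|]|[[a|]|]]. Qed.

Lemma hom_S21_edge_plus_isolated (T : finType) (k : nat) :
  hom (@S21_edge k) (edge_plus_isolated T) = 2.
Proof.
have deg_edge v : v \in [:: None; Some None] -> deg (edge_plus_isolated T) v = 1.
  by rewrite !inE => /orP[] /eqP->; rewrite deg_sum sum_option /= sum_option /= big1.
rewrite hom_S21; last by case=> [[a|]|] [[b|]|].
rewrite !sum_option /= !big1 ?deg_edge ?inE ?eqxx ?orbT ?exp1n //.
by move=> x _; rewrite big1.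
Qed.

Lemma hom_profile_relabel {T : finType} {e : rel T} : simple_graph e ->
  exists n (eG : rel 'I_n), simple_graph eG /\ forall i, homvec eG i = hom_profile e i.
Proof.
case=> e_sym e_irr; exists #|T|, (fun x y => e (enum_val x) (enum_val y)); split.
  by split=> [x y|x]; [exact: e_sym | exact: e_irr].
by case=> [|k]; apply: (hom_relabel _ _ _ _ _ _ _ (enum_val_bij T)).
Qed.

Lemma log_point_hom_profile (m : nat) (T : finType) (e : rel T) :
    simple_graph e -> (forall i, i <= m -> 0 < hom_profile e i) ->
  log_point m (fun i => ln (INR (hom_profile e i))).
Proof.
move=> e_simple pos; have [n [eG [eG_simple eG_hom]]] := hom_profile_relabel e_simple.
by exists n, eG; split=> // i im; rewrite eG_hom pos.
Qed.

Lemma in_cone_scale (m : nat) (c : R) (x : nat -> R) :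
  (0 <= c)%R -> log_point m x -> in_cone m (fun i => c * x i)%R.
Proof.
move=> c_ge0 x_log; exists [:: (c, x)]; split; first by move=> cp [<-|].
by move=> i _; rewrite /lincomb /= Rplus_0_r.
Qed.

Lemma INR_expn (n a : nat) : INR (n ^ a) = pow (INR n) a.
Proof. by elim: a => [|a IH] //=; rewrite expnS -multE mult_INR IH. Qed.

Lemma ln_le_compat (x y : R) : (0 < x)%R -> (x <= y)%R -> (ln x <= ln y)%R.
Proof. by move=> x_gt0 [/(ln_increasing _ _ x_gt0)/Rlt_le|->] //; apply: Rle_refl. Qed.

Lemma ln_nat_le {p q : nat} : 0 < p -> p <= q -> (ln (INR p) <= ln (INR q))%R.
Proof. by move=> /ltP/lt_0_INR p_gt0 /leP/le_INR; apply: ln_le_compat. Qed.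

Lemma ln_within_factor {h N a B : nat} : 0 < N -> 0 < h ->
    N ^ a <= h * B -> h <= B * N ^ a ->
  (Rabs (ln (INR h) - INR a * ln (INR N)) <= ln (INR B))%R.
Proof.
move=> N_gt0 h_gt0 lo hi; have Na_gt0 : 0 < N ^ a by rewrite expn_gt0 N_gt0.
have B_gt0 : 0 < B by move: (leq_trans Na_gt0 lo); rewrite muln_gt0 => /andP[].
have ln_mul p q : 0 < p -> 0 < q -> ln (INR (p * q)) = (ln (INR p) + ln (INR q))%R.
  by move=> /ltP/lt_0_INR p_gt0 /ltP/lt_0_INR q_gt0; rewrite -multE mult_INR ln_mult.
have ln_Na : ln (INR (N ^ a)) = (INR a * ln (INR N))%R.
  by rewrite INR_expn ln_pow //; apply/lt_0_INR/ltP.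
have := ln_nat_le Na_gt0 lo; have := ln_nat_le h_gt0 hi.
rewrite !ln_mul // ln_Na => hi' lo'; apply: Rabs_le; lra.
Qed.

Lemma exists_ln_nat_gt (L : R) : exists N, 0 < N /\ (L < ln (INR N))%R.
Proof.
have [n n_gt] := INR_unbounded (exp L); exists n.+1; split=> //.
rewrite -[X in (X < _)%R]ln_exp; apply: ln_increasing; first exact: exp_pos.
rewrite S_INR; lra.
Qed.

Lemma trop_NU_of_growth (m : nat) (d : nat -> R) (a : nat -> nat) (B : nat) :
    0 < B -> (forall i, i <= m -> d i = INR (a i)) ->
    (forall N, 0 < N -> exists (T : finType) (e : rel T), simple_graph e /\
       forall i, i <= m -> N ^ a i <= hom_profile e i * B /\ hom_profile e i <= B * N ^ a i) ->
  trop_NU m d.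
Proof.
move=> B_gt0 d_a graphs eps eps_gt0; set C := ln (INR B).
have C_ge0 : (0 <= C)%R by rewrite -ln_1; apply: (ln_nat_le (p := 1)).
have [N [N_gt0 N_large]] := exists_ln_nat_gt (C / eps).
have [T [e [e_simple bounds]]] := graphs N N_gt0; set L := ln (INR N) in N_large *.
have C_lt : (C < eps * L)%R.
  have := Rmult_lt_compat_r eps _ _ eps_gt0 N_large.
  by rewrite /Rdiv Rmult_assoc Rinv_l; lra.
have L_gt0 : (0 < L)%R by nra.
have hom_gt0 i : i <= m -> 0 < hom_profile e i.
  move=> im; have [lo _] := bounds i im.
  have Na_gt0 : 0 < N ^ a i by rewrite expn_gt0 N_gt0.
  by move: (leq_trans Na_gt0 lo); rewrite muln_gt0 => /andP[].
exists (fun i => / L * ln (INR (hom_profile e i)))%R; split.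
  apply: in_cone_scale; last exact: log_point_hom_profile.
  by left; apply: Rinv_0_lt_compat.
move=> i im; have [lo hi] := bounds i im; rewrite d_a //.
have := ln_within_factor N_gt0 (hom_gt0 i im) lo hi; rewrite -/L.
set x := ln (INR (hom_profile e i)) => x_close.
have -> : (/ L * x - INR (a i) = / L * (x - INR (a i) * L))%R by field; lra.
rewrite Rabs_mult Rabs_inv (Rabs_pos_eq L); last lra.
apply: (Rle_lt_trans _ (/ L * C)).
  by apply: Rmult_le_compat_l => //; left; apply: Rinv_0_lt_compat.
apply: (Rmult_lt_reg_l L) => //; rewrite -Rmult_assoc Rinv_r; lra.
Qed.

Lemma trop_NU_dvec1 (m : nat) : trop_NU m (dvec 1).
Proof.
apply: (trop_NU_of_growth _ _ (fun i => if i == 0 then 1 else 0) 3) => // [[|i] _ //|N N_gt0].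
exists _, (edge_plus_isolated 'I_N); split=> [|[|k] _]; first exact: edge_plus_isolated_simple.
  by rewrite /= hom_S0 !card_option card_ord; lia.
by rewrite /= hom_S21_edge_plus_isolated.
Qed.

Lemma trop_NU_dvec2 (m : nat) : trop_NU m (dvec 2).
Proof.
apply: (trop_NU_of_growth _ _ (fun=> 1) 2) => // N N_gt0.
have [M_sym _] := clique_union_simple 'I_N bool.
have M_deg v : deg (clique_union 'I_N bool) v = 1 by rewrite deg_clique_union card_bool.
exists _, (clique_union 'I_N bool); split=> [|[|k] _]; first exact: clique_union_simple.
  by rewrite /= hom_S0 card_prod card_ord card_bool; lia.
by rewrite /= (hom_S21_regular _ _ 1 _ M_sym M_deg) card_prod card_ord card_bool exp1n; lia.
Qed.

Lemma trop_NU_dvec3 (m : nat) : trop_NU m (dvec 3).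
Proof.
apply: (trop_NU_of_growth _ _
  (fun i => if i == 0 then 1 else if i == 1 then 2 else i) 2) => //.
  by case=> [|[|i]] _ //=; lra.
move=> N N_gt0; pose empty := fun _ _ : 'I_N => false.
have empty_deg v : deg empty v = 0 by apply: eq_card0.
exists _, (cone empty); split=> [|[|k] _]; first by apply: cone_simple.
  by rewrite /= hom_S0 card_option card_ord; lia.
rewrite /= (hom_S21_cone _ _ 0) ?card_ord ?exp1n //.
have Nk_gt0 : 0 < N ^ k by rewrite expn_gt0 N_gt0.
case: k Nk_gt0 => [|k] Nk_gt0; rewrite ?expnS; nia.
Qed.

Lemma trop_NU_dvec4 (m : nat) : trop_NU m (dvec 4).
Proof.
apply: (trop_NU_of_growth _ _ (fun i => if i == 0 then 1 else i + 2) 2) => //.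
  case=> [|i] _ //; change (INR i.+1 + 2 = INR (i.+1 + 2))%R.
  by rewrite -plusE plus_INR /=; lra.
move=> N N_gt0; have [K_sym _] := complete_graph_simple 'I_N.+1.
have K_deg v : deg (complete_graph 'I_N.+1) v = N by rewrite deg_complete_graph card_ord.
exists _, (complete_graph 'I_N.+1); split=> [|[|k] _].
- exact: complete_graph_simple.
- by rewrite /= hom_S0 card_ord; lia.
by rewrite /= (hom_S21_regular _ _ N _ K_sym K_deg) card_ord addn2 expnS; nia.
Qed.

Lemma trop_NU_dvec5 (m : nat) : trop_NU m (dvec 5).
Proof.
apply: (trop_NU_of_growth _ _
  (fun i => if i == 0 then 2 else if i == 1 then 4 else 2 * i + 1) 3) => //.
  case=> [|[|i]] _ /=; try lra; change (2 * INR i.+2 + 1 = INR (2 * i.+2 + 1))%R.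
  by rewrite -plusE -multE plus_INR mult_INR /=; lra.
case=> [//|N] _; have [clique_sym _] := clique_union_simple 'I_N.+1 'I_N.+1.
have clique_deg p : deg (clique_union 'I_N.+1 'I_N.+1) p = N.
  by rewrite deg_clique_union card_ord.
exists _, (cone (clique_union 'I_N.+1 'I_N.+1)); split=> [|[|[|k]] _].
- exact/cone_simple/clique_union_simple.
- by rewrite /= hom_S0 card_option card_prod card_ord; nia.
all: rewrite /= (hom_S21_cone _ _ N _ clique_sym clique_deg) card_prod card_ord.
  by rewrite !expnS !expn0; nia.
rewrite (_ : 2 * k.+2 + 1 = 5 + (k + k)) ?expnMn ?expnD ?expnS; last lia.
have Nk_gt0 : 0 < N.+1 ^ k by rewrite expn_gt0.
rewrite expn0; move: Nk_gt0; set P := N.+1 ^ k; set M := N.+1 => P_gt0.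
have h1 : M * M * M * M * M * P <= M * M * M * M * M * P * P := leq_pmulr _ P_gt0.
have h2 : M * M * M * M * N * P <= M * M * M * M * M * P.
  by rewrite leq_mul // leq_mul // leqnSn.
split; lia.
Qed.

Theorem lemma4p2 (m : nat) (hm : 1 <= m) (j : nat) (hj : 1 <= j <= 5) :
  trop_NU m (dvec j).
Proof.
case/andP: hj; case: j => [|[|[|[|[|[|j]]]]]] // _ _.
- exact: trop_NU_dvec1.
- exact: trop_NU_dvec2.
- exact: trop_NU_dvec3.
- exact: trop_NU_dvec4.
- exact: trop_NU_dvec5.
Qed.
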